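(* Let $f\in\mathbb{F}[V]$ be an isobaric polynomial of weight $\lambda\in\mathbb{Z}/(q-1)\mathbb{Z}$ whose $P$-orbit $fP$ has $|fP|=|P|$ (i.e., the stabiliser of $f$ in $P$ is trivial). Then the orbit product $\prod fP=\prod_{\sigma\in P}f\sigma$ is isobaric of weight $\lambda$.
   Context: Let $p>2$ be a prime, $q=p^n$, and $\mathbb{F}$ a field of characteristic $p$ containing $\mathbb{F}_q$. Let $\mathbb{F}[V]=\mathbb{F}[a_0,a_1,a_2]$. For $c\in\mathbb{F}_q$ let $\sigma_c=\begin{pmatrix}1&c\\0&1\end{pmatrix}$, acting on the right on $\mathbb{F}[a_0,a_1,a_2]$ by the algebra automorphism $a_2\mapsto a_2+2ca_1+c^2a_0$, $a_1\mapsto a_1+ca_0$, $a_0\mapsto a_0$, and let $P=\{\sigma_c: c\in\mathbb{F}_q\}$. The weight of a monomial $a_0^{e_0}a_1^{e_1}a_2^{e_2}$ is $e_1+2e_2$ taken in $\mathbb{Z}/(q-1)\mathbb{Z}$ (i.e., $\mathrm{wt}(a_i)=i$, extended multiplicatively-to-additively); a polynomial is isobaric of weight $\lambda$ if all its monomials have weight $\lambda$. *)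

From HB Require Import structures.
From mathcomp Require Import all_boot all_order all_algebra all_field.
From mathcomp Require Import multinomials.mpoly.
Set Implicit Arguments. Unset Strict Implicit. Unset Printing Implicit Defensive.
Import GRing.Theory.
Local Open Scope ring_scope.

(* F[V] = F[a_0, a_1, a_2] is {mpoly F[3]}, a_i = 'X_i. *)
Definition a0 {F : comRingType} : {mpoly F[3]} := 'X_(@Ordinal 3 0 isT).
Definition a1 {F : comRingType} : {mpoly F[3]} := 'X_(@Ordinal 3 1 isT).
Definition a2 {F : comRingType} : {mpoly F[3]} := 'X_(@Ordinal 3 2 isT).

Definition sigma_act {F : comRingType} (c : F) (f : {mpoly F[3]}) : {mpoly F[3]} :=
  comp_mpoly [tuple a0; a1 + c *: a0; a2 + (2 * c) *: a1 + (c ^+ 2) *: a0] f.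

(* weight of a monomial a0^e0 a1^e1 a2^e2 : e1 + 2 e2 (as a natural number;
   it is compared modulo q-1 below) *)
Definition mweight (m : 'X_{1..3}) : nat :=
  (m (@Ordinal 3 1 isT) + 2 * m (@Ordinal 3 2 isT))%N.

Definition isobaric {F : comRingType} (q : nat) (f : {mpoly F[3]}) (lam : nat) : Prop :=
  forall m : 'X_{1..3}, m \in msupp f -> mweight m = lam %[mod q.-1].

(* Let u generate F_q^*. The torus element diag(1, u, u^2) acts on F[V] by
   scaling each monomial by u^(its weight), so a polynomial is isobaric of
   weight lam exactly when it is an eigenvector with eigenvalue u^lam. This
   torus normalises P, conjugating sigma_(u c) into sigma_c, hence it permutes
   the factors of the orbit product, which is therefore again an eigenvector,
   with eigenvalue (u^lam)^q = u^lam. *)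

From Pilot Require Import Defs.
From HB Require Import structures.
From mathcomp Require Import all_boot all_order all_algebra all_field all_solvable.
From mathcomp Require Import multinomials.mpoly.
From mathcomp Require Import ring.
Set Implicit Arguments. Unset Strict Implicit. Unset Printing Implicit Defensive.
Import GRing.Theory.
Local Open Scope ring_scope.

Lemma comp_mpolyA (R : comNzRingType) (n k l : nat) (lq : k.-tuple {mpoly R[l]})
    (lr : n.-tuple {mpoly R[k]}) (p : {mpoly R[n]}) :
  comp_mpoly lq (comp_mpoly lr p) =
  comp_mpoly [tuple comp_mpoly lq (tnth lr i) | i < n] p.
Proof.
rewrite [comp_mpoly lr p]comp_mpolyEX [RHS]comp_mpolyEX raddf_sum.
apply: eq_bigr => m _; rewrite /= comp_mpolyZ !comp_mpolyX rmorph_prod.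
congr (_ *: _).
by apply: eq_bigr => i _; rewrite rmorphXn tnth_mktuple.
Qed.

Section DiagonalScaling.
Variables (R : comNzRingType) (n : nat) (w : 'I_n -> R).

Definition scale_vars : n.-tuple {mpoly R[n]} := [tuple w i *: 'X_i | i < n].

Lemma comp_mpoly_scale_varsX (m : 'X_{1..n}) :
  comp_mpoly scale_vars 'X_[m] = (\prod_(i < n) w i ^+ m i) *: 'X_[m].
Proof.
rewrite comp_mpolyX mpolyXE_id -scaler_prod; apply: eq_bigr => i _.
by rewrite tnth_mktuple exprZn.
Qed.

Lemma comp_mpoly_scale_varsXU (i : 'I_n) : comp_mpoly scale_vars 'X_i = w i *: 'X_i.
Proof. by rewrite comp_mpolyXU -tnth_nth tnth_mktuple. Qed.

Lemma mcoeff_comp_mpoly_scale_vars (p : {mpoly R[n]}) (m : 'X_{1..n}) :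
  (comp_mpoly scale_vars p)@_m = p@_m * \prod_(i < n) w i ^+ m i.
Proof.
rewrite (comp_mpolywE _ (leq_maxl (msize p) (mdeg m).+1)).
under eq_bigr => m' _ do rewrite -comp_mpolyX comp_mpoly_scale_varsX scalerA.
by rewrite (mcoeff_mpoly (fun m' => p@_m' * \prod_(i < n) w i ^+ m' i)) ?leq_maxr.
Qed.

End DiagonalScaling.

Section Torus.
Variable F : comNzRingType.

Definition torus_act (t : F) : {mpoly F[3]} -> {mpoly F[3]} :=
  comp_mpoly (scale_vars (fun i : 'I_3 => t ^+ i)).

Lemma mcoeff_torus_act (t : F) (p : {mpoly F[3]}) (m : 'X_{1..3}) :
  (torus_act t p)@_m = p@_m * t ^+ Defs.mweight m.
Proof.
rewrite mcoeff_comp_mpoly_scale_vars; congr (_ * _).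
rewrite !big_ord_recl big_ord0 /Defs.mweight /= expr0 expr1n mul1r mulr1.
rewrite -!exprM -exprD /bump /= mul1n.
by congr (t ^+ (m _ + 2 * m _)); apply: val_inj.
Qed.

Lemma torus_act_sigma (u c : F) (f : {mpoly F[3]}) :
  torus_act u (sigma_act (u * c) f) = sigma_act c (torus_act u f).
Proof.
rewrite /torus_act /sigma_act !comp_mpolyA.
congr comp_mpoly; apply: eq_from_tnth => i; rewrite !tnth_mktuple.
case: i => [[|[|[|//]]] ?]; rewrite !(tnth_nth 0) /= /a0 /a1 /a2.
all: rewrite ?comp_mpolyD ?comp_mpolyZ !comp_mpoly_scale_varsXU !comp_mpolyXU /=.
- by [].
- by rewrite scalerDr !scalerA; congr (_ + _ *: _); ring.
- by rewrite !scalerDr !scalerA; congr (_ + _ *: _ + _ *: _); ring.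
Qed.

End Torus.

Lemma isobaric_torusP (F : idomainType) (N lam : nat) (u : F) (p : {mpoly F[3]}) :
  N.-1.-primitive_root u ->
  isobaric N p lam <-> torus_act u p = u ^+ lam *: p.
Proof.
move=> u_prim; split => [iso_p | eigen_p m].
- apply/mpolyP => m; rewrite mcoeff_torus_act mcoeffZ mulrC.
  have [m_supp | m_supp] := boolP (m \in msupp p).
    by congr (_ * _); apply/eqP; rewrite (eq_prim_root_expr u_prim) iso_p.
  by rewrite memN_msupp_eq0 // !mulr0.
rewrite mcoeff_msupp => nz_pm; apply/eqP; rewrite -(eq_prim_root_expr u_prim).
have := congr1 (mcoeff m) eigen_p.
by rewrite mcoeff_torus_act mcoeffZ mulrC => /(mulIf nz_pm) ->.
Qed.

Lemma finField_prim_root (Fq : finFieldType) :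
  exists z : Fq, #|Fq|.-1.-primitive_root z.
Proof.
have /hasP [z _ z_prim] :
    has #|Fq|.-1.-primitive_root (enum [pred x : Fq | x != 0]).
  apply: has_prim_root.
  - by rewrite -subn1 subn_gt0 finNzRing_gt1.
  - apply/allP => x; rewrite mem_enum inE unity_rootE => nz_x.
    apply/eqP/(mulfI nz_x).
    by rewrite mulr1 -exprS (ltn_predK (finNzRing_gt1 Fq)) expf_card.
  - exact: enum_uniq.
  - by rewrite -cardE -(cardC1 0).
by exists z.
Qed.

Section OrbitProduct.
Variables (F : fieldType) (Fq : finFieldType) (iota : {rmorphism Fq -> F}).

Definition orbit_prod (f : {mpoly F[3]}) : {mpoly F[3]} :=
  \prod_(c : Fq) sigma_act (iota c) f.

Lemma torus_act_orbit_prod (z : Fq) (v : F) (f : {mpoly F[3]}) :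
  z != 0 -> torus_act (iota z) f = v *: f ->
  torus_act (iota z) (orbit_prod f) = v ^+ #|Fq| *: orbit_prod f.
Proof.
move=> nz_z eigen_f; rewrite /orbit_prod {1}/torus_act rmorph_prod.
rewrite (reindex_inj (mulfI nz_z)) /=.
under eq_bigr => c _ do
  rewrite -/(torus_act _ _) rmorphM torus_act_sigma eigen_f /sigma_act comp_mpolyZ.
by rewrite scaler_prod prodr_const.
Qed.

End OrbitProduct.

Theorem lemma2p1 (p n : nat) (F : fieldType) (Fq : finFieldType)
    (iota : {rmorphism Fq -> F}) (f : {mpoly F[3]}) (lam : nat) :
  prime p -> (2 < p)%N -> (0 < n)%N -> p \in [pchar F] ->
  #|Fq| = (p ^ n)%N ->
  isobaric (p ^ n) f lam ->
  size (undup [seq sigma_act (iota c) f | c <- enum Fq]) = #|Fq| ->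
  isobaric (p ^ n) (\prod_(c : Fq) sigma_act (iota c) f) lam.
Proof.
move=> _ _ _ _ <- iso_f _.
have [z z_prim] := finField_prim_root Fq.
have u_prim : #|Fq|.-1.-primitive_root (iota z) by rewrite fmorph_primitive_root.
have nz_z : z != 0.
  rewrite -unitfE -(unitrX_pos _ (prim_order_gt0 z_prim)).
  by rewrite (prim_expr_order z_prim) unitr1.
have u_card : iota z ^+ #|Fq| = iota z by rewrite -rmorphXn expf_card.
have /(isobaric_torusP lam f u_prim) eigen_f := iso_f.
apply/(isobaric_torusP lam _ u_prim); rewrite -/(orbit_prod iota f).
by rewrite (torus_act_orbit_prod nz_z eigen_f) -exprM mulnC exprM u_card.
Qed.
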